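(* Let $\lambda\in P^+$ and let $\lambda_1,\mu_1\in P^+$ with $\lambda-\lambda_1,\lambda-\mu_1\in P^+$, such that $(\lambda_1,\lambda-\lambda_1)\preceq(\mu_1,\lambda-\mu_1)$. Then there is a canonical surjective homomorphism of $\mathfrak{sl}_n\otimes\mathbb C[t]$-modules $F_{\mu_1,\lambda-\mu_1}\twoheadrightarrow F_{\lambda_1,\lambda-\lambda_1}$.
   Context: $\mathfrak{sl}_n=\mathfrak n^+\oplus\mathfrak h\oplus\mathfrak n^-$, $R^+$ positive roots, $P^+$ dominant integral weights; for $\alpha\in R^+$ fix an $\mathfrak{sl}_2$-triple $e_\alpha,f_\alpha,h_\alpha$ with $f_\alpha\in\mathfrak g_{-\alpha}$. For $\lambda\in P^+$, $P(\lambda,2)$ is the set of pairs $(\lambda_1,\lambda_2)\in P^+\times P^+$ with $\lambda_1+\lambda_2=\lambda$ (modulo swapping the two entries), with the partial order $(\lambda_1,\lambda-\lambda_1)\preceq(\mu_1,\lambda-\mu_1)$ iff $\min\{\lambda_1(h_\alpha),(\lambda-\lambda_1)(h_\alpha)\}\le\min\{\mu_1(h_\alpha),(\lambda-\mu_1)(h_\alpha)\}$ for all $\alpha\in R^+$. The current algebra $\mathfrak{sl}_n\otimes\mathbb C[t]$ has bracket $[x\otimes p,y\otimes q]=[x,y]\otimes pq$. For $\nu_1,\nu_2\in P^+$, $\nu=\nu_1+\nu_2$, $F_{\nu_1,\nu_2}$ is the $\mathfrak{sl}_n\otimes\mathbb C[t]$-module generated by $\mathbb 1$ subject to $(\mathfrak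 n^+\otimes\mathbb C[t]).\mathbb 1=0$, $(\mathfrak h\otimes t\mathbb C[t]).\mathbb 1=0$, $(\mathfrak n^-\otimes t^2\mathbb C[t]).\mathbb 1=0$, $(h\otimes1).\mathbb 1=\nu(h)\mathbb 1$, and for $\alpha\in R^+$: $(f_\alpha\otimes1)^{\nu(h_\alpha)+1}.\mathbb 1=0$, $(f_\alpha\otimes t)^{\min\{\nu_1(h_\alpha),\nu_2(h_\alpha)\}+1}.\mathbb 1=0$. *)

From HB Require Import structures.
From mathcomp Require Import all_boot all_order all_algebra.
From mathcomp Require Import complex.
From mathcomp Require Import Rstruct.
Set Implicit Arguments. Unset Strict Implicit. Unset Printing Implicit Defensive.
Import Order.TTheory GRing.Theory Num.Theory.
Local Open Scope ring_scope.

Definition CC : fieldType := (Rdefinitions.R)[i].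

Section Current.
Variable K : fieldType.
Variable n : nat.

(* The current algebra sl_n (x) K[t] is realised as the trace-zero elements of
   gl_n(K[t]) = 'M[{poly K}]_n, with bracket [X,Y] = XY - YX; indeed
   [x (x) p, y (x) q] = [x,y] (x) pq. *)
Definition curalg := 'M[{poly K}]_n.
Definition in_sl (X : curalg) : Prop := \tr X = 0.

Definition tens (x : 'M[K]_n) (p : {poly K}) : curalg :=
  map_mx (fun c => c%:P * p) x.

(* A representation of sl_n (x) K[t] on a K-vector space V.  rho is only
   constrained on the trace-zero (i.e. sl_n (x) K[t]) elements. *)
Definition is_rep (V : lmodType K) (rho : curalg -> V -> V) : Prop :=
  [/\ (forall X u w, rho X (u + w) = rho X u + rho X w),
      (forall X (c : K) u, rho X (c *: u) = c *: rho X u),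
      (forall X Y u, in_sl X -> in_sl Y -> rho (X + Y) u = rho X u + rho Y u),
      (forall (c : K) X u, in_sl X -> rho (c%:P *: X) u = c *: rho X u)
    & (forall X Y u, in_sl X -> in_sl Y ->
         rho (X *m Y - Y *m X) u = rho X (rho Y u) - rho Y (rho X u))].

Definition is_hom (V W : lmodType K) (rho : curalg -> V -> V)
    (sigma : curalg -> W -> W) (phi : V -> W) : Prop :=
  [/\ (forall u w, phi (u + w) = phi u + phi w),
      (forall (c : K) u, phi (c *: u) = c *: phi u)
    & (forall X u, in_sl X -> phi (rho X u) = sigma X (phi u))].

(* Weights of sl_n are given by their Dynkin labels (coordinates in the basis
   of fundamental weights omega_1..omega_{n-1}); index i : 'I_n.-1 stands for
   omega_{i+1} = eps_0 + ... + eps_i (0-based).  Dominant integral weights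
   P^+ are exactly the label vectors with values in nat. *)
Definition weight := 'I_n.-1 -> nat.
Definition wadd (a b : weight) : weight := fun i => (a i + b i)%N.
Definition wsub (a b : weight) : weight := fun i => (a i - b i)%N.

Definition wt_on (nu : weight) (h : 'M[K]_n) : K :=
  \sum_(i < n.-1) (nu i)%:R * \sum_(k < n | (k <= i)%N) h k k.

(* Positive roots alpha = eps_p - eps_q with p < q; e_alpha = E_pq,
   f_alpha = E_qp, h_alpha = E_pp - E_qq, and nu(h_alpha) = sum_{p<=i<q} nu_i. *)
Definition wt_coroot (nu : weight) (p q : 'I_n) : nat :=
  (\sum_(i < n.-1 | (p <= i < q)%N) nu i)%N.

Definition f_root (p q : 'I_n) : 'M[K]_n := delta_mx q p.

Definition F_rel (nu1 nu2 : weight) (V : lmodType K) (rho : curalg -> V -> V)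
    (v : V) : Prop :=
  let nu := wadd nu1 nu2 in
  (* (n^+ (x) K[t]).v = 0 *)
      (forall X : curalg, (forall i j : 'I_n, (j <= i)%N -> X i j = 0) ->
         rho X v = 0) /\
      (* (h (x) tK[t]).v = 0 *)
      (forall X : curalg, (forall i j : 'I_n, i != j -> X i j = 0) ->
         in_sl X -> (forall i : 'I_n, (X i i)`_0 = 0) -> rho X v = 0) /\
      (* (n^- (x) t^2K[t]).v = 0 *)
      (forall X : curalg, (forall i j : 'I_n, (i <= j)%N -> X i j = 0) ->
         (forall i j : 'I_n, (X i j)`_0 = 0 /\ (X i j)`_1 = 0) -> rho X v = 0) /\
      (* (h (x) 1).v = nu(h) v *)
      (forall h : 'M[K]_n, (forall i j : 'I_n, i != j -> h i j = 0) ->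
         \tr h = 0 -> rho (tens h 1) v = wt_on nu h *: v) /\
      (* (f_alpha (x) 1)^{nu(h_alpha)+1}.v = 0 *)
      (forall p q : 'I_n, (p < q)%N ->
         iter (wt_coroot nu p q).+1 (rho (tens (f_root p q) 1)) v = 0) /\
      (* (f_alpha (x) t)^{min(nu1(h_alpha),nu2(h_alpha))+1}.v = 0 *)
      (forall p q : 'I_n, (p < q)%N ->
         iter (minn (wt_coroot nu1 p q) (wt_coroot nu2 p q)).+1
              (rho (tens (f_root p q) 'X)) v = 0).

(* (V, rho, v) is the module F_{nu1,nu2} with generator v = 1: the module
   generated by v subject to the relations above, i.e. the universal
   (initial) object among representations with a vector satisfying F_rel. *)
Definition is_F (nu1 nu2 : weight) (V : lmodType K) (rho : curalg -> V -> V)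
    (v : V) : Prop :=
  [/\ is_rep rho, F_rel nu1 nu2 rho v &
      forall (W : lmodType K) (sigma : curalg -> W -> W) (w : W),
        is_rep sigma -> F_rel nu1 nu2 sigma w ->
        exists phi : V -> W, is_hom rho sigma phi /\ phi v = w /\
          forall psi : V -> W, is_hom rho sigma psi -> psi v = w ->
            forall u, psi u = phi u].

Definition preceq2 (lam1 lam2 mu1 mu2 : weight) : Prop :=
  forall p q : 'I_n, (p < q)%N ->
    (minn (wt_coroot lam1 p q) (wt_coroot lam2 p q)
     <= minn (wt_coroot mu1 p q) (wt_coroot mu2 p q))%N.

End Current.

(* The relations of F_{lam1, lam-lam1} imply those of F_{mu1, lam-mu1}: both
   have total weight lam, and the only relation depending on the splitting,
   (f_alpha (x) t)^(m+1) = 0 with m = min(nu1(h_alpha), nu2(h_alpha)), only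
   gets weaker as m grows, which is what the order on P(lam,2) says.  So the
   generator w of F_{lam1,lam-lam1} receives a homomorphism from
   F_{mu1,lam-mu1} sending its generator to w.  Any such homomorphism is onto:
   its image is a submodule containing w, so the universal property gives a
   map F_{lam1,lam-lam1} -> image, and its composite with the inclusion is an
   endomorphism fixing w, hence the identity. *)
From HB Require Import structures.
From mathcomp Require Import all_boot all_order all_algebra.
From Stdlib Require Import ClassicalEpsilon FunctionalExtensionality.
Import GRing.Theory.
Set Implicit Arguments. Unset Strict Implicit.
Local Open Scope ring_scope.

Section CurrentModules.
Variable n : nat.
Implicit Types (X : curalg CC n).

Lemma mxtrace_tens (x : 'M[CC]_n) p : \tr (tens x p) = (\tr x)%:P * p.
Proof.
rewrite /mxtrace /tens (@raddf_sum _ _ (@polyC CC)) mulr_suml.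
by apply: eq_bigr => i _; rewrite mxE.
Qed.

Lemma tens_f_root_in_sl (p q : 'I_n) c : (p < q)%N -> in_sl (tens (f_root CC p q) c).
Proof.
move=> lt_pq; rewrite /in_sl mxtrace_tens /f_root /mxtrace big1 ?mul0r // => i _.
rewrite mxE; case: (eqVneq i q) => [->|//]; case: (eqVneq q p) => [eq_qp|//].
by move: lt_pq; rewrite eq_qp ltnn.
Qed.

Lemma diag0_in_sl X : (forall i : 'I_n, X i i = 0) -> in_sl X.
Proof. by move=> X0; rewrite /in_sl /mxtrace big1. Qed.

Lemma rep_op0 (V : lmodType CC) (rho : curalg CC n -> V -> V) X :
  is_rep rho -> rho X 0 = 0.
Proof.
case=> rhoD _ _ _ _; apply: (@addrI _ (rho X 0)).
by rewrite addr0 -rhoD addr0.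
Qed.

Lemma iter_eq0_leq (V : lmodType CC) (f : V -> V) x a b :
  f 0 = 0 -> (a <= b)%N -> iter a.+1 f x = 0 -> iter b.+1 f x = 0.
Proof. by move=> f0 le_ab fx0; rewrite -(subnK le_ab) -addnS iterD fx0 iter_fix. Qed.

Lemma F_rel_inj_hom (nu1 nu2 : weight n) (A B : lmodType CC) (rA : curalg CC n -> A -> A)
    (rB : curalg CC n -> B -> B) (f : A -> B) a :
  injective f -> f 0 = 0 -> (forall (c : CC) u, f (c *: u) = c *: f u) ->
  (forall X u, in_sl X -> f (rA X u) = rB X (f u)) ->
  F_rel nu1 nu2 rB (f a) -> F_rel nu1 nu2 rA a.
Proof.
move=> f_inj f0 fZ f_hom [R1 [R2 [R3 [R4 [R5 R6]]]]].
have kills X u : in_sl X -> rB X (f u) = 0 -> rA X u = 0.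
  by move=> slX fu0; apply: f_inj; rewrite f_hom // fu0 f0.
have f_iter X k u : in_sl X -> f (iter k (rA X) u) = iter k (rB X) (f u).
  by move=> slX; elim: k => //= k IH; rewrite f_hom // IH.
split; [|split; [|split; [|split; [|split]]]].
- by move=> X X_up; apply: kills (R1 X X_up); apply: diag0_in_sl => i; apply: X_up.
- by move=> X X_diag slX X_t; apply: kills (R2 X X_diag slX X_t).
- by move=> X X_lo X_t2; apply: kills (R3 X X_lo X_t2); apply: diag0_in_sl => i; apply: X_lo.
- move=> h h_diag trh; apply: f_inj.
  by rewrite f_hom ?R4 ?fZ // /in_sl mxtrace_tens trh mul0r.
- by move=> p q lt_pq; apply: f_inj; rewrite f_iter ?R5 ?f0 //; apply: tens_f_root_in_sl.
- by move=> p q lt_pq; apply: f_inj; rewrite f_iter ?R6 ?f0 //; apply: tens_f_root_in_sl.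
Qed.

Lemma wadd_wsubK (lam nu : weight n) :
  (forall i, (nu i <= lam i)%N) -> wadd nu (wsub lam nu) = lam.
Proof. by move=> le_nu; apply: functional_extensionality => i; rewrite /wadd /wsub subnKC. Qed.

Lemma F_rel_preceq2 (lam lam1 mu1 : weight n) (V : lmodType CC) rho (w : V) :
  (forall i, (lam1 i <= lam i)%N) -> (forall i, (mu1 i <= lam i)%N) ->
  preceq2 lam1 (wsub lam lam1) mu1 (wsub lam mu1) -> is_rep rho ->
  F_rel lam1 (wsub lam lam1) rho w -> F_rel mu1 (wsub lam mu1) rho w.
Proof.
move=> le_lam1 le_mu1 le_split rep_rho; rewrite /F_rel /= !wadd_wsubK //.
case=> [R1 [R2 [R3 [R4 [R5 R6]]]]]; do 5 (split => //).
move=> p q lt_pq; apply: iter_eq0_leq (R6 p q lt_pq) => //.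
- exact: rep_op0.
- exact: le_split.
Qed.

Lemma is_F_endo_id (nu1 nu2 : weight n) (W : lmodType CC) (sigma : curalg CC n -> W -> W)
    (w : W) (psi : W -> W) :
  is_F nu1 nu2 sigma w -> is_hom sigma sigma psi -> psi w = w -> psi =1 id.
Proof.
case=> rep_sigma Fw univ hom_psi psi_w y.
have [phi [_ [_ phi_unique]]] := univ W sigma w rep_sigma Fw.
rewrite (phi_unique psi) //; symmetry.
by apply: (phi_unique id); first split.
Qed.

End CurrentModules.

Section HomImage.
Variables (n : nat) (V W : lmodType CC) (rho : curalg CC n -> V -> V)
  (sigma : curalg CC n -> W -> W) (phi : V -> W).
Hypothesis hom_phi : is_hom rho sigma phi.

(* The proof argument is unused; it keys the canonical submodule instance
   below, whose closure proof needs it. *)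
Definition hom_image (_ : is_hom rho sigma phi) (y : W) : bool :=
  if excluded_middle_informative (exists x, phi x = y) then true else false.

Lemma hom_imageP y : reflect (exists x, phi x = y) (hom_image hom_phi y).
Proof. by rewrite /hom_image; case: excluded_middle_informative => ?; constructor. Qed.

Lemma hom_image_submod_closed : subsemimod_closed (hom_image hom_phi).
Proof.
have [phiD phiZ _] := hom_phi.
split; [split|].
- by apply/hom_imageP; exists 0; rewrite -(scale0r 0) phiZ scale0r.
- by move=> _ _ /hom_imageP[x <-] /hom_imageP[y <-]; apply/hom_imageP; exists (x + y).
- by move=> c _ /hom_imageP[x <-]; apply/hom_imageP; exists (c *: x).
Qed.

HB.instance Definition _ :=
  GRing.isSubmodClosed.Build CC W (hom_image hom_phi) hom_image_submod_closed.

Inductive image_mod : predArgType := ImageMod y & hom_image hom_phi y.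
Definition image_val (u : image_mod) := let: ImageMod y _ := u in y.
HB.instance Definition _ := [isSub of image_mod for image_val].
HB.instance Definition _ := [Choice of image_mod by <:].
HB.instance Definition _ := [SubChoice_isSubZmodule of image_mod by <:].
HB.instance Definition _ := [SubZmodule_isSubLmodule of image_mod by <:].

(* Outside sl_n (x) C[t] the action is irrelevant; 0 keeps it total. *)
Definition image_rep (X : curalg CC n) (u : image_mod) : image_mod :=
  if \tr X == 0 then insubd (0 : image_mod) (sigma X (val u)) else 0.

Lemma image_repE X u : in_sl X -> val (image_rep X u) = sigma X (val u).
Proof.
move=> slX; rewrite /image_rep slX eqxx insubdK //.
case: u => _ /= /hom_imageP[x <-]; have [_ _ phi_hom] := hom_phi.
by apply/hom_imageP; exists (rho X x); rewrite phi_hom.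
Qed.

Lemma image_rep_is_rep : is_rep sigma -> is_rep image_rep.
Proof.
case=> sigmaD sigmaZ sigmaDl sigmaZl sigma_comm.
have off_sl X u : \tr X != 0 -> image_rep X u = 0 by rewrite /image_rep => /negbTE->.
split.
- move=> X u u'; have [/eqP slX|] := boolP (\tr X == 0); last by move=> ?; rewrite !off_sl ?addr0.
  by apply: val_inj; rewrite /= !image_repE //= sigmaD.
- move=> X c u; have [/eqP slX|] := boolP (\tr X == 0); last by move=> ?; rewrite !off_sl ?scaler0.
  by apply: val_inj; rewrite /= !image_repE //= sigmaZ.
- move=> X Y u slX slY; have slXY : in_sl (X + Y) by rewrite /in_sl mxtraceD slX slY addr0.
  by apply: val_inj; rewrite /= !image_repE //= sigmaDl.
- move=> c X u slX; have slcX : in_sl (c%:P *: X) by rewrite /in_sl mxtraceZ slX mulr0.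
  by apply: val_inj; rewrite /= !image_repE //= sigmaZl.
- move=> X Y u slX slY.
  have slXY : in_sl (X *m Y - Y *m X) by rewrite /in_sl raddfB /= mxtrace_mulC subrr.
  by apply: val_inj; rewrite /= !image_repE //= sigma_comm.
Qed.

Lemma hom_onto_F (nu1 nu2 : weight n) (v : V) (w : W) :
  is_F nu1 nu2 sigma w -> phi v = w -> forall y, exists x, phi x = y.
Proof.
move=> F_w phi_v y; have [rep_sigma Fw univ] := F_w.
have w_in : hom_image hom_phi w by apply/hom_imageP; exists v.
pose w' : image_mod := Sub w w_in.
have Fw' : F_rel nu1 nu2 image_rep w'.
  apply: (@F_rel_inj_hom _ _ _ _ _ _ _ val) => //; first exact: val_inj.
  - by move=> X u slX; rewrite image_repE.
  - by rewrite SubK.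
have [psi [[psiD psiZ psi_hom] [psi_w _]]] :=
  univ _ _ _ (image_rep_is_rep rep_sigma) Fw'.
have val_psi_id : (fun u => val (psi u)) =1 id.
  apply: is_F_endo_id F_w _ _; last by rewrite psi_w SubK.
  split=> [a b|c a|X u slX]; first by rewrite psiD.
  - by rewrite psiZ.
  - by rewrite psi_hom // image_repE.
by apply/hom_imageP; rewrite -[y]val_psi_id (valP (psi y)).
Qed.

End HomImage.

Theorem lemma9p1 (n : nat) (lam lam1 mu1 : weight n)
  (Hlam1 : forall i, (lam1 i <= lam i)%N)
  (Hmu1 : forall i, (mu1 i <= lam i)%N)
  (Hle : preceq2 lam1 (wsub lam lam1) mu1 (wsub lam mu1))
  (V : lmodType CC) (rho : curalg CC n -> V -> V) (v : V)
  (HV : is_F mu1 (wsub lam mu1) rho v)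
  (W : lmodType CC) (sigma : curalg CC n -> W -> W) (w : W)
  (HW : is_F lam1 (wsub lam lam1) sigma w) :
  exists phi : V -> W,
    [/\ is_hom rho sigma phi, phi v = w & forall y : W, exists x : V, phi x = y].
Proof.
have [_ _ univV] := HV; have [rep_sigma Fw _] := HW.
have Fw_mu := F_rel_preceq2 Hlam1 Hmu1 Hle rep_sigma Fw.
have [phi [hom_phi [phi_v _]]] := univV W sigma w rep_sigma Fw_mu.
exists phi; split=> // y.
exact: (hom_onto_F hom_phi HW phi_v y).
Qed.
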